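(* Let $n\ge2$ be even and $L\ge1$ an integer. Let $\rho_{\text{in}}=U(\boldsymbol\beta)(|0\rangle\langle0|)^{\otimes n}U(\boldsymbol\beta)^\dagger$, where $U(\boldsymbol\beta)=V_{2L+1}U_LU_{L-1}\cdots U_1X^{\otimes n}$ is the $L$-layer encoding circuit described in the context. Then $$\mathbb{E}_{\boldsymbol\beta}\,\alpha(\rho_{\text{in}})\ge 2^{-2L},$$ where $\alpha(\rho)=\text{Tr}[(\sigma_1\otimes I^{\otimes(n-1)})\rho]^2+\text{Tr}[(\sigma_3\otimes I^{\otimes(n-1)})\rho]^2$ and the expectation is over all parameters $\beta_j^{(k)}$ drawn independently and uniformly from $[0,2\pi]$.
   Context: Pauli matrices $\sigma_0=I,\sigma_1=X,\sigma_2=Y,\sigma_3=Z$. Qubits are numbered $1,\dots,n$. For $j=1,\dots,2L+1$, $V_j=W_j^{(1)}\otimes\cdots\otimes W_j^{(n)}$ with $W_j^{(k)}=e^{-i\beta_j^{(k)}\sigma_2}$ acting on qubit $k$. $CZ$ on qubits $(a,b)$ is $|0\rangle\langle0|_a\otimes I_b+|1\rangle\langle1|_a\otimes(\sigma_3)_b$. $CZ_1$ is the product of $CZ$ gates on the pairs $(1,2),(3,4),\dots,(n-1,n)$; $CZ_2$ is the product of $CZ$ gates on the pairs $(2,3),(4,5),\dots,(n-2,n-1)$ and $(n,1)$. The $j$-th alternating layer is $U_j=CZ_1V_{2j}CZ_2V_{2j-1}$. *)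

From HB Require Import structures.
From mathcomp Require Import all_boot all_order all_algebra.
From mathcomp Require Import all_classical all_reals all_analysis.
From mathcomp Require Import complex.
Import Order.TTheory GRing.Theory Num.Theory.
Import numFieldNormedType.Exports.
Local Open Scope ring_scope.
Local Open Scope complex_scope.

(* Computational basis of n qubits: bit strings x, with x k the value of
   qubit k+1 (qubits are numbered 1..n in the paper). *)
Definition basis (n : nat) := {ffun 'I_n -> bool}.

Definition op (R : realType) (n : nat) := basis n -> basis n -> R[i].

Definition opmul (R : realType) n (A B : op R n) : op R n :=
  fun x y => \sum_(z : basis n) A x z * B z y.
Definition opadd (R : realType) n (A B : op R n) : op R n :=
  fun x y => A x y + B x y.
Definition opid (R : realType) n : op R n := fun x y => (x == y)%:R.
Definition opadj (R : realType) n (A : op R n) : op R n :=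
  fun x y => (A y x)^*.
Definition optr (R : realType) n (A : op R n) : R[i] :=
  \sum_(x : basis n) A x x.

(* Single-qubit operators, as 2x2 matrices indexed by bool (false = |0>). *)
Definition gate1 (R : realType) := bool -> bool -> R[i].
Definition sI (R : realType) : gate1 R := fun a b => (a == b)%:R.
Definition sX (R : realType) : gate1 R := fun a b => (a != b)%:R.
Definition sY (R : realType) : gate1 R :=
  fun a b => if a == b then 0 else if b then - 'i else 'i.
Definition sZ (R : realType) : gate1 R :=
  fun a b => if a == b then (if a then -1 else 1) else 0.
Definition proj0 (R : realType) : gate1 R := fun a b => ((~~ a) && (~~ b))%:R.
Definition proj1 (R : realType) : gate1 R := fun a b => (a && b)%:R.

(* W(beta) = exp(-i beta sigma_2) = cos beta I - i sin beta sigma_2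
   (sigma_2^2 = I). *)
Definition Wgate (R : realType) (beta : R) : gate1 R :=
  fun a b => (cos beta)%:C * sI R a b - 'i * (sin beta)%:C * sY R a b.

(* Tensor product G_1 (x) ... (x) G_n; G k acts on qubit k+1. *)
Definition tens (R : realType) n (G : 'I_n -> gate1 R) : op R n :=
  fun x y => \prod_(k < n) G k (x k) (y k).

(* G acting on qubit q (1-based), identity elsewhere. *)
Definition onq (R : realType) n (q : nat) (G : gate1 R) : op R n :=
  tens R n (fun k : 'I_n => if k.+1 == q then G else sI R).

(* CZ on qubits (a,b): |0><0|_a (x) I_b + |1><1|_a (x) (sigma_3)_b. *)
Definition CZ (R : realType) n (a b : nat) : op R n :=
  opadd R n (onq R n a (proj0 R))
        (tens R n (fun k : 'I_n => if k.+1 == a then proj1 R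
                               else if k.+1 == b then sZ R else sI R)).

Definition opprod (R : realType) n (s : seq (op R n)) : op R n :=
  foldr (opmul R n) (opid R n) s.

Definition CZ1 (R : realType) n : op R n :=
  opprod R n [seq CZ R n i.*2.+1 i.*2.+2 | i <- iota 0 n./2].
Definition CZ2 (R : realType) n : op R n :=
  opprod R n (rcons [seq CZ R n i.*2.+2 i.*2.+3 | i <- iota 0 n./2.-1]
                (CZ R n n 1)).

(* Parameters: beta j k = beta_j^{(k)} (both indices 1-based). *)
Definition params (R : realType) := nat -> nat -> R.

Definition Vlayer (R : realType) n (beta : params R) (j : nat) : op R n :=
  tens R n (fun k : 'I_n => Wgate R (beta j k.+1)).

Definition Ulayer (R : realType) n (beta : params R) (j : nat) : op R n :=
  opprod R n [:: CZ1 R n; Vlayer R n beta j.*2; CZ2 R n; Vlayer R n beta j.*2.-1].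

Fixpoint Ulayers (R : realType) n (beta : params R) (L : nat) : op R n :=
  match L with
  | 0 => opid R n
  | L'.+1 => opmul R n (Ulayer R n beta L'.+1) (Ulayers R n beta L')
  end.

Definition Ucirc (R : realType) n (L : nat) (beta : params R) : op R n :=
  opprod R n [:: Vlayer R n beta L.*2.+1; Ulayers R n beta L; tens R n (fun _ => sX R)].

Definition rho0 (R : realType) n : op R n := tens R n (fun _ => proj0 R).

Definition rho_in (R : realType) n (L : nat) (beta : params R) : op R n :=
  opprod R n [:: Ucirc R n L beta; rho0 R n; opadj R n (Ucirc R n L beta)].

(* alpha(rho) = Tr[(sigma_1 (x) I) rho]^2 + Tr[(sigma_3 (x) I) rho]^2.
   The traces are real for Hermitian rho; we take their real parts. *)
Definition alpha (R : realType) n (rho : op R n) : R :=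
  (complex.Re (optr R n (opmul R n (onq R n 1 (sX R)) rho))) ^+ 2 +
  (complex.Re (optr R n (opmul R n (onq R n 1 (sZ R)) rho))) ^+ 2.

(* Expectation over independent uniform parameters on [0, 2pi] for the
   coordinates listed in ps: iterated normalized Lebesgue integrals. *)
Definition upd (R : realType) (b : params R) (p : nat * nat) (t : R) : params R :=
  fun j k => if (j, k) == p then t else b j k.

Fixpoint expect (R : realType) (ps : seq (nat * nat)) (f : params R -> R)
    (b : params R) : R :=
  match ps with
  | [::] => f b
  | p :: ps' => (pi *+ 2)^-1 *
      (\int[@lebesgue_measure R]_(t in `[0, pi *+ 2]) expect R ps' f (upd R b p t))
  end.

Definition all_params (n L : nat) : seq (nat * nat) :=
  [seq (j, k) | j <- iota 1 L.*2.+1, k <- iota 1 n].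

(* Only the first qubit matters. The input X^(x)n |0...0> = |1...1> has
   <Z_1> = -1. Every CZ is a diagonal unitary, so it leaves <Z_1> unchanged,
   while V_j rotates the first qubit in the (Z, X)-plane by 2 beta_j^(1):
   <Z_1> becomes cos(2b) <Z_1> - sin(2b) <X_1>, whose square averages over b
   to (<Z_1>^2 + <X_1>^2) / 2 >= <Z_1>^2 / 2. The L layers contain 2L such
   rotations, so E <Z_1>^2 >= 4^-L just before V_(2L+1), and that last rotation
   preserves alpha = <X_1>^2 + <Z_1>^2 >= <Z_1>^2. *)

From Pilot Require Import Defs.
From HB Require Import structures.
From mathcomp Require Import all_boot all_order all_algebra.
From mathcomp Require Import all_classical all_reals all_analysis.
From mathcomp Require Import complex.
From mathcomp Require Import ring zify.
Import Order.TTheory GRing.Theory Num.Theory.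
Import numFieldNormedType.Exports.
(* mathcomp-analysis shadows [basis] with the basis of a topology. *)
Import Defs.
Local Open Scope ring_scope.

(* The nonnegative integral is a supremum over simple functions below the
   integrand, so it is monotone without measurability; the iterated averages
   of [expect] are not known to be measurable. *)
Lemma ge0_le_integral_nonmeas d (T : measurableType d) (R : realType)
    (mu : {measure set T -> \bar R}) (D : set T) (f g : T -> \bar R) :
  (forall x, D x -> (0 <= f x)%E) -> (forall x, D x -> (f x <= g x)%E) ->
  (\int[mu]_(x in D) f x <= \int[mu]_(x in D) g x)%E.
Proof.
move=> f0 fg.
have g0 x : D x -> (0 <= g x)%E by move=> Dx; exact: le_trans (f0 x Dx) (fg x Dx).
rewrite !ge0_integralE //; apply: ereal_sup_le => _ [h hf <-].
exists h => // x; apply: le_trans (hf x) _.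
by rewrite /patch; case: ifP => // /set_mem; exact: fg.
Qed.

Section Average.
Context {R : realType}.

Local Notation period := (`[0%R, (pi *+ 2)%R]%classic : set R).

Definition avg (g : R -> R) : R :=
  (pi *+ 2)^-1 * Rintegral (@lebesgue_measure R) period g.

Let pi2_gt0 : 0 < pi *+ 2 :> R.
Proof. by rewrite mulrn_wgt0 // pi_gt0. Qed.

Let measure_period :
  lebesgue_measure period = (pi *+ 2)%:E.
Proof.
have := lebesgue_measure_itv (`[0, pi *+ 2] : interval R).
by rewrite /= lte_fin pi2_gt0 oppr0 adde0.
Qed.

Lemma avg_cst c : avg (fun _ => c) = c.
Proof.
have period_len : fine (lebesgue_measure period) = pi *+ 2.
  by rewrite measure_period.
rewrite /avg Rintegral_cst // period_len mulrCA mulVf ?mulr1 //.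
by rewrite gt_eqF.
Qed.

Let integral_bounded (g : R -> R) M : (forall t, 0 <= g t <= M) ->
  (\int[@lebesgue_measure R]_(t in period) (g t)%:E \is a fin_num)%E.
Proof.
move=> gM; rewrite ge0_fin_numE; last first.
  by apply: integral_ge0 => t _; rewrite lee_fin; case/andP: (gM t).
apply: (@le_lt_trans _ _ (\int[@lebesgue_measure R]_(t in period) M%:E)%E).
  by apply: ge0_le_integral_nonmeas => t _; rewrite lee_fin; case/andP: (gM t).
suff -> : (\int[@lebesgue_measure R]_(t in period) M%:E = (M * (pi *+ 2))%:E)%E.
  exact: ltry.
by rewrite integral_cst // EFinM; congr (_ * _)%E; exact: measure_period.
Qed.

Lemma ler_avg (h g : R -> R) M : (forall t, 0 <= h t <= g t) ->
  (forall t, g t <= M) -> avg h <= avg g.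
Proof.
move=> hg gM.
have h0 t : 0 <= h t by case/andP: (hg t).
have hb t : 0 <= h t <= M by rewrite h0 (le_trans _ (gM t)) //; case/andP: (hg t).
have gb t : 0 <= g t <= M by rewrite gM andbT; case/andP: (hg t) => /le_trans; apply.
rewrite /avg; apply: ler_wpM2l; first by rewrite invr_ge0 ltW.
apply: fine_le; [exact: integral_bounded hb | exact: integral_bounded gb |].
by apply: ge0_le_integral_nonmeas => t _; rewrite lee_fin; case/andP: (hg t).
Qed.

Lemma avg_bound (g : R -> R) M : (forall t, 0 <= g t <= M) -> 0 <= avg g <= M.
Proof.
move=> gM; have g0 t : 0 <= g t by case/andP: (gM t).
have gleM t : g t <= M by case/andP: (gM t).
apply/andP; split.
  by rewrite -(avg_cst 0); apply: (@ler_avg _ _ M) => t; rewrite ?lexx ?g0 ?gleM.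
by rewrite -[leRHS](avg_cst M); apply: (@ler_avg _ _ M) => t; rewrite ?g0 ?gleM.
Qed.

Definition cos_dbl (t : R) := cos t ^+ 2 - sin t ^+ 2.
Definition sin_dbl (t : R) := cos t * sin t *+ 2.

Lemma cos_dbl2Dsin_dbl2 t : cos_dbl t ^+ 2 + sin_dbl t ^+ 2 = 1.
Proof. by rewrite /cos_dbl /sin_dbl -(expr1n _ 2) -(cos2Dsin2 t); ring. Qed.

Lemma avg_rotation_sqr k A B :
  avg (fun t => k * (cos_dbl t * A - sin_dbl t * B) ^+ 2) =
  k * (A ^+ 2 + B ^+ 2) / 2.
Proof.
pose C : R -> R := (cos ^+ 2 - sin ^+ 2)%R.
pose S : R -> R := (2 *: (cos * sin))%R.
pose h : R -> R := (cst k * (C * cst A - S * cst B) ^+ 2)%R.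
have hE : (fun t => k * (cos_dbl t * A - sin_dbl t * B) ^+ 2) = h.
  by apply/funext => t; rewrite /h /C /S /cos_dbl /sin_dbl !fctE /GRing.scale /=; ring.
(* F is a primitive of h because C^2 + S^2 = 1, C' = -2S and S' = 2C. *)
pose F : R -> R := (k * (A ^+ 2 + B ^+ 2) / 2) *: id +
  (k * (A ^+ 2 - B ^+ 2) / 4) *: (C * S) + (k * A * B / 2) *: (C ^+ 2).
have dF (t : R) : is_derive t (1 : R) F (h t).
  apply: is_derive_eq; rewrite /h /F /C /S !fctE /GRing.scale /=.
  have := cos2Dsin2 t; set c := cos t; set s := sin t => e.
  have e2 : (c ^+ 2 - s ^+ 2) ^+ 2 + (2 * (c * s)) ^+ 2 = 1.
    by transitivity ((c ^+ 2 + s ^+ 2) ^+ 2); [ring | rewrite e expr1n].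
  apply/eqP; rewrite -subr_eq0; apply/eqP.
  transitivity (k * (A ^+ 2 + B ^+ 2) / 2 *
    (1 - ((c ^+ 2 - s ^+ 2) ^+ 2 + (2 * (c * s)) ^+ 2))); first by field.
  by rewrite e2 subrr mulr0.
have Fd (u : R) : derivable F u 1 by case: (dF u).
have cF : continuous F.
  by move=> t; exact/differentiable_continuous/derivable1_diffP.
have ch : continuous h.
  by move=> t; apply/differentiable_continuous/derivable1_diffP; exact: ex_derive.
rewrite hE /avg /Rintegral (@continuous_FTC2 R h F 0 (pi *+ 2)) //; last first.
- by move=> t _; rewrite derive1E; exact: derive_val.
- split; [by move=> t _; exact: Fd | exact: cvg_at_right_filter (cF 0) |
          exact: cvg_at_left_filter (cF _)].
- exact: continuous_subspaceT.
rewrite /F /C /S !fctE /GRing.scale /= cos2pi sin2pi cos0 sin0.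
have : (pi : R) != 0 by rewrite gt_eqF // pi_gt0.
by move: (pi : R) => p p0; field.
Qed.

End Average.

Local Open Scope complex_scope.

Lemma sum_delta_r (T : finType) (V : pzRingType) (F : T -> V) a :
  \sum_z F z * (z == a)%:R = F a.
Proof.
rewrite (bigD1 a) //= eqxx mulr1 big1 ?addr0 // => z /negbTE->.
by rewrite mulr0.
Qed.

Lemma sum_delta_l (T : finType) (V : pzRingType) (F : T -> V) a :
  \sum_z (a == z)%:R * F z = F a.
Proof.
rewrite (bigD1 a) //= eqxx mul1r big1 ?addr0 // => z za.
by rewrite eq_sym (negbTE za) mul0r.
Qed.

Section Gates.
Context {R : realType}.
Implicit Types (g w : gate1 R) (t : R).

Definition gmul g (h : gate1 R) : gate1 R := fun a b => \sum_c g a c * h c b.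
Definition gadj g : gate1 R := fun a b => (g b a)^*.
Definition gconj w g := gmul (gadj w) (gmul g w).
Definition gate_diag g := forall a b, g a b = (a == b)%:R * g a a.

Lemma sI_diag : gate_diag (sI R).
Proof. by move=> [] []; rewrite /sI /= ?mulr1 ?mul0r. Qed.

Lemma sZ_diag : gate_diag (sZ R).
Proof. by move=> [] []; rewrite /sZ /= ?mul1r ?mul0r. Qed.

Lemma proj0_diag : gate_diag (proj0 R).
Proof. by move=> [] []; rewrite /proj0 /= ?mul1r ?mul0r. Qed.

Lemma proj1_diag : gate_diag (proj1 R).
Proof. by move=> [] []; rewrite /proj1 /= ?mul1r ?mul0r. Qed.

Lemma sI_norm_le1 a b : `|sI R a b| <= 1.
Proof. by case: a; case: b; rewrite /sI /= ?normr1 ?normr0 ?ler01. Qed.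

Lemma sX_norm_le1 a b : `|sX R a b| <= 1.
Proof. by case: a; case: b; rewrite /sX /= ?normr1 ?normr0 ?ler01. Qed.

Lemma sZ_norm_le1 a b : `|sZ R a b| <= 1.
Proof. by case: a; case: b; rewrite /sZ /= ?normrN ?normr1 ?normr0 ?ler01. Qed.

Lemma WgateE t a b : Wgate R t a b =
  if a then (if b then (cos t)%:C else (sin t)%:C)
  else (if b then - (sin t)%:C else (cos t)%:C).
Proof.
have ii : 'i * 'i = -1 :> R[i] by rewrite -expr2 sqr_i.
case: a; case: b; rewrite /Wgate /sI /sY /= ?mulr1 ?mulr0 ?subr0 ?sub0r //.
  by rewrite mulrAC ii mulN1r opprK.
by rewrite mulrN opprK mulrAC ii mulN1r.
Qed.

Lemma gadj_Wgate t : gadj (Wgate R t) = fun a b => Wgate R t b a.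
Proof.
apply/funext => a; apply/funext => b; rewrite /gadj !WgateE.
by case: a; case: b; rewrite -?rmorphN conjc_real.
Qed.

Lemma gconj_Wgate_sI t : gconj (Wgate R t) (sI R) = sI R.
Proof.
have e : (cos t)%:C ^+ 2 + (sin t)%:C ^+ 2 = 1 :> R[i].
  by rewrite -!rmorphXn -rmorphD cos2Dsin2.
apply/funext => a; apply/funext => b.
rewrite /gconj /gmul gadj_Wgate !big_bool /= !WgateE /sI.
by case: a; case: b => /=; rewrite -?[X in _ = X]e; ring.
Qed.

Lemma gconj_Wgate_sZ t : gconj (Wgate R t) (sZ R) =
  fun a b => (cos_dbl t)%:C * sZ R a b + (- sin_dbl t)%:C * sX R a b.
Proof.
apply/funext => a; apply/funext => b.
rewrite /gconj /gmul gadj_Wgate !big_bool /= !WgateE /sZ /sX /cos_dbl /sin_dbl.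
by rewrite rmorphN rmorphMn rmorphB !rmorphM; case: a; case: b => /=; ring.
Qed.

Lemma gconj_Wgate_sX t : gconj (Wgate R t) (sX R) =
  fun a b => (sin_dbl t)%:C * sZ R a b + (cos_dbl t)%:C * sX R a b.
Proof.
apply/funext => a; apply/funext => b.
rewrite /gconj /gmul gadj_Wgate !big_bool /= !WgateE /sZ /sX /cos_dbl /sin_dbl.
by rewrite rmorphMn rmorphB !rmorphM; case: a; case: b => /=; ring.
Qed.

End Gates.

Section Operators.
Context {R : realType} {n : nat}.

Definition vapply (A : op R n) (v : basis n -> R[i]) : basis n -> R[i] :=
  fun x => \sum_z A x z * v z.
Definition expval (T : op R n) (v : basis n -> R[i]) : R[i] :=
  \sum_x \sum_y (v x)^* * T x y * v y.
Definition diagop (d : basis n -> R[i]) : op R n := fun x y => (x == y)%:R * d x.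
Definition diag_unitary (D : op R n) :=
  exists2 d, (forall x, (d x)^* * d x = 1) & D = diagop d.

Lemma vapply_id v : vapply (opid R n) v = v.
Proof. by apply/funext => x; rewrite /vapply /opid sum_delta_l. Qed.

Lemma vapply_mul A B v : vapply (opmul R n A B) v = vapply A (vapply B v).
Proof.
apply/funext => x; rewrite /vapply /opmul.
under eq_bigr do rewrite mulr_suml.
rewrite exchange_big; apply: eq_bigr => w _.
by rewrite mulr_sumr; apply: eq_bigr => z _; rewrite mulrA.
Qed.

Lemma expval_vapply T A v :
  expval T (vapply A v) = expval (opmul R n (opadj R n A) (opmul R n T A)) v.
Proof.
rewrite /expval /vapply /opmul /opadj.
pose F x y z w := (v z)^* * ((A x z)^* * (T x y * A y w)) * v w.
transitivity (\sum_x \sum_y \sum_z \sum_w F x y z w).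
  apply: eq_bigr => x _; apply: eq_bigr => y _.
  rewrite rmorph_sum !mulr_suml; apply: eq_bigr => z _.
  by rewrite !mulr_sumr; apply: eq_bigr => w _; rewrite rmorphM /F; ring.
transitivity (\sum_z \sum_w \sum_x \sum_y F x y z w); last first.
  apply: eq_bigr => z _; apply: eq_bigr => w _.
  rewrite mulr_sumr mulr_suml; apply: eq_bigr => x _.
  by rewrite !mulr_sumr mulr_suml; apply: eq_bigr => y _; rewrite /F mulrA.
transitivity (\sum_x \sum_z \sum_w \sum_y F x y z w).
  by apply: eq_bigr => x _; rewrite exchange_big; apply: eq_bigr => z _; exact: exchange_big.
by rewrite exchange_big; apply: eq_bigr => z _; exact: exchange_big.
Qed.

Lemma expval_comb (a b : R[i]) T1 T2 v :
  expval (fun x y => a * T1 x y + b * T2 x y) v = a * expval T1 v + b * expval T2 v.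
Proof.
rewrite /expval !mulr_sumr -big_split; apply: eq_bigr => x _.
by rewrite !mulr_sumr -big_split; apply: eq_bigr => y _ /=; ring.
Qed.

Lemma tens_mul (F G : 'I_n -> gate1 R) :
  opmul R n (tens R n F) (tens R n G) = tens R n (fun k => gmul (F k) (G k)).
Proof.
apply/funext => x; apply/funext => y; rewrite /opmul /tens /gmul.
by rewrite bigA_distr_bigA /=; apply: eq_bigr => z _; rewrite -big_split.
Qed.

Lemma tens_adj (F : 'I_n -> gate1 R) :
  opadj R n (tens R n F) = tens R n (fun k => gadj (F k)).
Proof. by apply/funext => x; apply/funext => y; rewrite /opadj /tens rmorph_prod. Qed.

Lemma prod_eq_basis (x y : basis n) :
  \prod_k ((x k == y k)%:R : R[i]) = (x == y)%:R.
Proof.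
have [->|nxy] := eqVneq x y; first by rewrite big1 // => k _; rewrite eqxx.
have [k /negbTE kxy] : exists k, x k != y k.
  apply/existsP; rewrite -negb_forall; apply: contra nxy => /forallP xy.
  by apply/eqP/ffunP => k; exact/eqP.
by rewrite (bigD1 k) //= kxy mul0r.
Qed.

Lemma tens_diag (G : 'I_n -> gate1 R) : (forall k, gate_diag (G k)) ->
  tens R n G = diagop (fun x => \prod_k G k (x k) (x k)).
Proof.
move=> Gd; apply/funext => x; apply/funext => y; rewrite /tens /diagop.
rewrite (eq_bigr _ (fun k _ => Gd k (x k) (y k))).
by rewrite big_split /= prod_eq_basis.
Qed.

Lemma tens_sI : tens R n (fun _ => sI R) = opid R n.
Proof.
apply/funext => x; apply/funext => y.
by rewrite /tens /opid -prod_eq_basis.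
Qed.

Lemma opid_diag : opid R n = diagop (fun _ => 1).
Proof.
rewrite -tens_sI tens_diag; last by move=> _; exact: sI_diag.
by congr diagop; apply/funext => x; rewrite big1 // => k _; rewrite /sI eqxx.
Qed.

Lemma vapply_diagop d v : vapply (diagop d) v = fun x => d x * v x.
Proof.
apply/funext => x; rewrite /vapply /diagop.
by under eq_bigr do rewrite -mulrA; rewrite sum_delta_l.
Qed.

Lemma expval_diagop d v : expval (diagop d) v = \sum_x (v x)^* * d x * v x.
Proof.
rewrite /expval /diagop; apply: eq_bigr => x _.
transitivity (\sum_y (x == y)%:R * ((v x)^* * d x * v y)).
  by apply: eq_bigr => y _; ring.
exact: sum_delta_l.
Qed.

Lemma expval_diag_unitary d D v : diag_unitary D ->
  expval (diagop d) (vapply D v) = expval (diagop d) v.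
Proof.
case=> u uu ->; rewrite !expval_diagop vapply_diagop; apply: eq_bigr => x _.
transitivity ((u x)^* * u x * ((v x)^* * d x * v x)); last by rewrite uu mul1r.
by rewrite rmorphM; ring.
Qed.

Lemma diag_unitary_id : diag_unitary (opid R n).
Proof. by exists (fun _ => 1); [move=> x; rewrite rmorph1 mulr1 | exact: opid_diag]. Qed.

Lemma diag_unitary_mul A B :
  diag_unitary A -> diag_unitary B -> diag_unitary (opmul R n A B).
Proof.
move=> [d1 u1 ->] [d2 u2 ->]; exists (fun x => d1 x * d2 x).
  move=> x; transitivity ((d1 x)^* * d1 x * ((d2 x)^* * d2 x)).
    by rewrite rmorphM; ring.
  by rewrite u1 u2 mulr1.
apply/funext => x; apply/funext => y; rewrite /opmul /diagop.
transitivity (\sum_z (x == z)%:R * (d1 x * ((z == y)%:R * d2 z))).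
  by apply: eq_bigr => z _; ring.
by rewrite sum_delta_l; ring.
Qed.

Lemma diag_unitary_foldr (T : eqType) (f : T -> op R n) D (l : seq T) :
  diag_unitary D -> (forall i, i \in l -> diag_unitary (f i)) ->
  diag_unitary (foldr (opmul R n) D (map f l)).
Proof.
move=> DU; elim: l => [|a l IH] //= fU.
apply: diag_unitary_mul; first by apply: fU; rewrite inE eqxx.
by apply: IH => i il; apply: fU; rewrite inE il orbT.
Qed.

Local Hint Resolve sI_diag sZ_diag proj0_diag proj1_diag : core.

Lemma CZ_diag_unitary a b : (0 < a <= n)%N -> b != a -> diag_unitary (CZ R n a b).
Proof.
case: a => [//|a] /= an ba; pose ka : 'I_n := Ordinal an.
have kaE (k : 'I_n) : (k.+1 == a.+1) = (k == ka) by [].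
rewrite /CZ /onq !tens_diag => [|k|k]; try by do 2?case: ifP => _.
set d0 := fun x => _; set d1 := fun x => _.
exists (fun x => d0 x + d1 x); last first.
  by apply/funext => x; apply/funext => y; rewrite /opadd /diagop mulrDr.
move=> x.
pose s := \prod_(k < n | k != ka) (if k.+1 == b then sZ R else sI R) (x k) (x k).
have s_unit : s^* * s = 1.
  rewrite /s rmorph_prod -big_split big1 // => k _ /=.
  by case: ifP => _; case: (x k); rewrite /sZ /sI /= ?rmorphN ?rmorph1 ?mulrNN mulr1.
have -> : d0 x = (~~ x ka)%:R.
  rewrite /d0 (bigD1 ka) //= eqxx big1 ?mulr1 => [|k /negbTE kka].
    by rewrite /proj0; case: (x ka).
  by rewrite kaE kka /sI eqxx.
have -> : d1 x = (x ka)%:R * s.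
  rewrite /d1 (bigD1 ka) //= eqxx; congr (_ * _); first by rewrite /proj1; case: (x ka).
  by apply: eq_bigr => k /negbTE kka; rewrite kaE kka.
by case: (x ka); rewrite /= ?mul1r ?add0r ?mul0r ?addr0 // rmorph1 mulr1.
Qed.

Lemma CZ1_diag_unitary : diag_unitary (CZ1 R n).
Proof.
apply: diag_unitary_foldr => [|i]; first exact: diag_unitary_id.
by rewrite mem_iota => iln; apply: CZ_diag_unitary; lia.
Qed.

Lemma CZ2_diag_unitary : (2 <= n)%N -> diag_unitary (CZ2 R n).
Proof.
move=> n2; rewrite /CZ2 /opprod foldr_rcons.
apply: diag_unitary_foldr => [|i].
  by apply: diag_unitary_mul (diag_unitary_id); apply: CZ_diag_unitary; lia.
by rewrite mem_iota => iln; apply: CZ_diag_unitary; lia.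
Qed.

Lemma Vlayer_conj_onq b j q G :
  opmul R n (opadj R n (Vlayer R n b j)) (opmul R n (onq R n q G) (Vlayer R n b j)) =
  onq R n q (gconj (Wgate R (b j q)) G).
Proof.
rewrite /Vlayer /onq tens_adj !tens_mul; congr tens; apply/funext => k.
by case: eqP => [<- //|_]; exact: gconj_Wgate_sI.
Qed.

Lemma Vlayer_conj_opid b j :
  opmul R n (opadj R n (Vlayer R n b j)) (opmul R n (opid R n) (Vlayer R n b j)) =
  opid R n.
Proof.
rewrite -tens_sI /Vlayer tens_adj !tens_mul; congr tens.
by apply/funext => k; exact: gconj_Wgate_sI.
Qed.

Lemma onq_norm_le1 q G x y :
  (forall a c, `|G a c| <= 1) -> `|onq R n q G x y| <= 1.
Proof.
move=> G1; rewrite /onq /tens normr_prod; apply: prodr_ile1 => k _.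
by rewrite normr_ge0; case: ifP => _; rewrite ?G1 ?sI_norm_le1.
Qed.

Definition sqnorm v := expval (opid R n) v.

Lemma sqnorm_entry_le1 v : sqnorm v = 1 -> forall x, `|v x| <= 1.
Proof.
rewrite /sqnorm opid_diag expval_diagop => v1 x.
have : `|v x| ^+ 2 <= 1.
  rewrite -v1 (bigD1 x) //= mulr1 mulrC -sqr_normc lerDl.
  by apply: sumr_ge0 => y _; rewrite mulr1 mulrC -sqr_normc exprn_ge0.
by rewrite expr_le1.
Qed.

Lemma Re_expval_sqr_le T v : (forall x y, `|T x y| <= 1) -> sqnorm v = 1 ->
  complex.Re (expval T v) ^+ 2 <= ((#|{: basis n}| ^ 2)%:R) ^+ 2.
Proof.
move=> T1 /sqnorm_entry_le1 v1.
have expval_le : `|expval T v| <= (#|{: basis n}| ^ 2)%:R.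
  have -> : (#|{: basis n}| ^ 2)%:R = \sum_(x : basis n) \sum_(y : basis n) 1 :> R[i].
    by rewrite !sumr_const -mulrnA expnS expn1.
  rewrite (le_trans (ler_norm_sum _ _ _)) // ler_sum // => x _.
  rewrite (le_trans (ler_norm_sum _ _ _)) // ler_sum // => y _.
  by rewrite !normrM normcJ !mulr_ile1 ?mulr_ge0 ?normr_ge0 ?v1 ?T1.
have Re_le : `|complex.Re (expval T v)| <= (#|{: basis n}| ^ 2)%:R.
  by rewrite -lecR rmorph_nat (le_trans (normc_ge_Re _)).
by rewrite -real_normK ?num_real // lerXn2r ?nnegrE.
Qed.

End Operators.

Lemma Re_lincomb {R : realType} (a b : R) (u w : R[i]) :
  complex.Re (a%:C * u + b%:C * w) = a * complex.Re u + b * complex.Re w.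
Proof. by case: u => ? ?; case: w => ? ? /=; rewrite !mul0r !subr0. Qed.

Section FirstQubit.
Context {R : realType} {n : nat}.

Definition expZ1 (v : basis n -> R[i]) := expval (onq R n 1 (sZ R)) v.
Definition expX1 (v : basis n -> R[i]) := expval (onq R n 1 (sX R)) v.

Lemma onq_diag q G : gate_diag G ->
  onq R n q G = diagop (fun x => \prod_(k < n) (if k.+1 == q then G else sI R) (x k) (x k)).
Proof. by move=> Gd; apply: tens_diag => k; case: ifP => _ //; exact: sI_diag. Qed.

Lemma onq_comb a (c1 c2 : R[i]) G1 G2 : (a < n)%N ->
  onq R n a.+1 (fun u w => c1 * G1 u w + c2 * G2 u w) =
  fun x y => c1 * onq R n a.+1 G1 x y + c2 * onq R n a.+1 G2 x y.
Proof.
move=> an; pose ka : 'I_n := Ordinal an.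
apply/funext => x; apply/funext => y; rewrite /onq /tens.
rewrite (bigD1 ka) // [X in c1 * X](bigD1 ka) // [X in c2 * X](bigD1 ka) //= eqxx.
have others G : \prod_(k < n | k != ka) (if k.+1 == a.+1 then G else sI R) (x k) (y k) =
                \prod_(k < n | k != ka) sI R (x k) (y k).
  by apply: eq_bigr => k /negbTE kka; rewrite (_ : k.+1 == a.+1 = false).
by rewrite !others; ring.
Qed.

Lemma expZ1_diag_unitary (D : op R n) v : diag_unitary D -> expZ1 (vapply D v) = expZ1 v.
Proof. by move=> DU; rewrite /expZ1 onq_diag ?expval_diag_unitary //; exact: sZ_diag. Qed.

Lemma sqnorm_diag_unitary (D : op R n) v : diag_unitary D -> sqnorm (vapply D v) = sqnorm v.
Proof. by move=> DU; rewrite /sqnorm opid_diag expval_diag_unitary. Qed.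

Lemma sqnorm_Vlayer b j v : sqnorm (vapply (Vlayer R n b j) v) = sqnorm v.
Proof. by rewrite /sqnorm expval_vapply Vlayer_conj_opid. Qed.

Hypothesis n_gt0 : (0 < n)%N.

Lemma Re_expZ1_Vlayer b j v :
  complex.Re (expZ1 (vapply (Vlayer R n b j) v)) =
  cos_dbl (b j 1%N) * complex.Re (expZ1 v) - sin_dbl (b j 1%N) * complex.Re (expX1 v).
Proof.
rewrite /expZ1 expval_vapply Vlayer_conj_onq gconj_Wgate_sZ onq_comb //.
by rewrite expval_comb Re_lincomb mulNr.
Qed.

Lemma Re_expX1_Vlayer b j v :
  complex.Re (expX1 (vapply (Vlayer R n b j) v)) =
  sin_dbl (b j 1%N) * complex.Re (expZ1 v) + cos_dbl (b j 1%N) * complex.Re (expX1 v).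
Proof.
rewrite /expX1 expval_vapply Vlayer_conj_onq gconj_Wgate_sX onq_comb //.
by rewrite expval_comb Re_lincomb.
Qed.

End FirstQubit.

Section Circuit.
Context {R : realType} {n : nat}.

Definition ket (x0 : basis n) : basis n -> R[i] := fun x => (x == x0)%:R.
Definition column (A : op R n) (x0 : basis n) : basis n -> R[i] := fun x => A x x0.

Definition bits0 : basis n := [ffun => false].
Definition bits1 : basis n := [ffun => true].

Lemma opmulr1 (A : op R n) : opmul R n A (opid R n) = A.
Proof. by apply/funext => x; apply/funext => y; rewrite /opmul /opid sum_delta_r. Qed.

Lemma rho0E : rho0 R n = diagop (ket bits0).
Proof.
rewrite /rho0 tens_diag => [|k]; last exact: proj0_diag.
congr diagop; apply/funext => x; rewrite /ket -prod_eq_basis.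
by apply: eq_bigr => k _; rewrite /bits0 ffunE; case: (x k).
Qed.

Lemma rho_inE L b x y :
  rho_in R n L b x y = column (Ucirc R n L b) bits0 x * (column (Ucirc R n L b) bits0 y)^*.
Proof.
rewrite /rho_in /opprod /= opmulr1 rho0E {1}/opmul /column.
set U := Ucirc R n L b.
transitivity (\sum_z U x z * (U y z)^* * (z == bits0)%:R); last by rewrite sum_delta_r.
apply: eq_bigr => z _; rewrite /opmul /diagop /opadj /ket.
transitivity (U x z * \sum_w (z == w)%:R * ((z == bits0)%:R * (U y w)^*)).
  by congr (_ * _); apply: eq_bigr => w _; ring.
by rewrite sum_delta_l; ring.
Qed.

Lemma alphaE L b : alpha R n (rho_in R n L b) =
  complex.Re (expX1 (column (Ucirc R n L b) bits0)) ^+ 2 +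
  complex.Re (expZ1 (column (Ucirc R n L b) bits0)) ^+ 2.
Proof.
suff optr_rho T : optr R n (opmul R n T (rho_in R n L b)) = expval T (column (Ucirc R n L b) bits0).
  by rewrite /alpha !optr_rho.
rewrite /optr /expval /opmul; apply: eq_bigr => x _; apply: eq_bigr => z _.
by rewrite rho_inE; ring.
Qed.

Definition state (b : params R) i := vapply (Ulayers R n b i) (ket bits1).

Lemma column_Ucirc L b :
  column (Ucirc R n L b) bits0 = vapply (Vlayer R n b L.*2.+1) (state b L).
Proof.
rewrite /column /Ucirc /opprod /state /= opmulr1; apply/funext => x.
rewrite /opmul /vapply; apply: eq_bigr => z _; congr (_ * _).
apply: eq_bigr => w _; congr (_ * _); rewrite /tens /ket -prod_eq_basis.
by apply: eq_bigr => k _; rewrite /bits0 /bits1 !ffunE; case: (w k).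
Qed.

Lemma state0 b : state b 0 = ket bits1.
Proof. exact: vapply_id. Qed.

Lemma stateS b i : state b i.+1 =
  vapply (CZ1 R n) (vapply (Vlayer R n b i.*2.+2)
    (vapply (CZ2 R n) (vapply (Vlayer R n b i.*2.+1) (state b i)))).
Proof. by rewrite /state /= vapply_mul /Ulayer /opprod /= !vapply_mul vapply_id. Qed.

Lemma Vlayer_upd b j j' k t :
  j' != j -> Vlayer R n (upd R b (j, k) t) j' = Vlayer R n b j'.
Proof.
move=> jj; rewrite /Vlayer /upd; congr tens.
by apply/funext => k'; rewrite xpair_eqE (negbTE jj).
Qed.

Lemma Ulayers_upd b i j k t :
  (i.*2 < j)%N -> Ulayers R n (upd R b (j, k) t) i = Ulayers R n b i.
Proof.
elim: i => [//|i IH] ij /=.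
by rewrite IH /Ulayer ?Vlayer_upd //; lia.
Qed.

Lemma state_upd b i j k t : (i.*2 < j)%N -> state (upd R b (j, k) t) i = state b i.
Proof. by move=> ij; rewrite /state Ulayers_upd. Qed.

Lemma sqnorm_state b i : (2 <= n)%N -> sqnorm (state b i) = 1.
Proof.
move=> n2; elim: i => [|i IH].
  rewrite state0 /sqnorm opid_diag expval_diagop (bigD1 bits1) //= big1 => [|x /negbTE x1].
    by rewrite /ket eqxx rmorph1 !mulr1 addr0.
  by rewrite /ket x1 mulr0.
rewrite stateS sqnorm_diag_unitary; last exact: CZ1_diag_unitary.
by rewrite sqnorm_Vlayer sqnorm_diag_unitary ?sqnorm_Vlayer //; exact: CZ2_diag_unitary.
Qed.

Lemma expZ1_ket_bits1 : (0 < n)%N -> expZ1 (ket bits1) = -1.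
Proof.
move=> n_gt0; rewrite /expZ1 onq_diag ?expval_diagop; last exact: sZ_diag.
rewrite (bigD1 bits1) //= [X in _ + X]big1 => [|x /negbTE x1]; last by rewrite /ket x1 mulr0.
rewrite /ket eqxx rmorph1 mul1r mulr1 addr0 (bigD1 (Ordinal n_gt0)) //= big1 => [|k k0].
  by rewrite /bits1 ffunE /sZ mulr1.
by rewrite ifF ?/sI ?eqxx //; apply: contraNF k0 => /eqP k1; apply/eqP/val_inj => /=; lia.
Qed.

End Circuit.

Section Expectation.
Context {R : realType}.

Lemma expect_cons p ps (f : params R -> R) b :
  expect R (p :: ps) f b = avg (fun t => expect R ps f (upd R b p t)).
Proof. by []. Qed.

Lemma expect_cat ps1 ps2 (f : params R -> R) :
  expect R (ps1 ++ ps2) f = expect R ps1 (expect R ps2 f).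
Proof. by elim: ps1 => [//|p ps1 IH]; apply/funext => b /=; rewrite IH. Qed.

Lemma expect_bound ps (f : params R -> R) M :
  (forall b, 0 <= f b <= M) -> forall b, 0 <= expect R ps f b <= M.
Proof.
move=> fM; elim: ps => [//|p ps IH] b.
by rewrite expect_cons; apply: avg_bound => t; exact: IH.
Qed.

Lemma expect_ge_invariant ps (f K : params R -> R) M :
  (forall b, 0 <= f b <= M) -> (forall b, 0 <= K b <= f b) ->
  (forall p b t, p \in ps -> K (upd R b p t) = K b) ->
  forall b, K b <= expect R ps f b.
Proof.
move=> fM Kf; elim: ps => [|p ps IH] KI b; first by case/andP: (Kf b).
rewrite expect_cons -[leLHS]avg_cst; apply: (@ler_avg _ _ _ M) => t.
  rewrite -(KI p b t) ?mem_head // IH ?andbT => [|q b' t' qps].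
    by case/andP: (Kf (upd R b p t)).
  by apply: KI; rewrite inE qps orbT.
by case/andP: (expect_bound ps _ _ fM (upd R b p t)).
Qed.

Definition layer_params n j : seq (nat * nat) := [seq (j, k) | k <- iota 1 n].

Lemma expect_rotation_ge n j (f A B : params R -> R) M c :
  (0 < n)%N -> 0 <= c -> (forall b, 0 <= f b <= M) ->
  (forall b k t, A (upd R b (j, k) t) = A b) ->
  (forall b k t, B (upd R b (j, k) t) = B b) ->
  (forall b, c * (cos_dbl (b j 1%N) * A b - sin_dbl (b j 1%N) * B b) ^+ 2 <= f b) ->
  forall b, c / 2 * A b ^+ 2 <= expect R (layer_params n j) f b.
Proof.
case: n => // n _ c0 fM AI BI fge b; rewrite [layer_params _ _]/= expect_cons.
pose H b' := c * (cos_dbl (b' j 1%N) * A b' - sin_dbl (b' j 1%N) * B b') ^+ 2.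
have H_le t : 0 <= H (upd R b (j, 1%N) t) <=
    expect R [seq (j, k) | k <- iota 2 n] f (upd R b (j, 1%N) t).
  rewrite mulr_ge0 ?sqr_ge0 //=; apply: (@expect_ge_invariant _ _ H M) => //.
    by move=> b'; rewrite mulr_ge0 ?sqr_ge0 ?fge.
  move=> _ b' t' /mapP[k kn ->]; rewrite /H AI BI /upd xpair_eqE eqxx /=.
  by case: eqP kn => [<-|]; rewrite // mem_iota.
apply: le_trans (@ler_avg _ _ _ M H_le _); last first.
  by move=> t; case/andP: (expect_bound [seq (j, k) | k <- iota 2 n] _ _ fM (upd R b (j, 1%N) t)).
have -> : (fun t => H (upd R b (j, 1%N) t)) =
          (fun t => c * (cos_dbl t * A b - sin_dbl t * B b) ^+ 2).
  by apply/funext => t; rewrite /H AI BI /upd eqxx.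
rewrite avg_rotation_sqr -subr_ge0 (_ : _ - _ = c / 2 * B b ^+ 2); last by ring.
by rewrite mulr_ge0 ?sqr_ge0 ?divr_ge0.
Qed.

End Expectation.

Section Layers.
Context {R : realType} {n : nat}.
Hypothesis n2 : (2 <= n)%N.

Lemma expect_layer_ge j (f : params R -> R) M c (phi : params R -> basis n -> R[i]) :
  0 <= c -> (forall b, 0 <= f b <= M) ->
  (forall b k t, phi (upd R b (j, k) t) = phi b) ->
  (forall b, c * complex.Re (expZ1 (vapply (Vlayer R n b j) (phi b))) ^+ 2 <= f b) ->
  forall b, c / 2 * complex.Re (expZ1 (phi b)) ^+ 2 <= expect R (layer_params n j) f b.
Proof.
have n_gt0 : (0 < n)%N by lia.
move=> c0 fM phiI fge.
apply: (@expect_rotation_ge _ n j f _ (fun b => complex.Re (expX1 (phi b))) M c)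
  => // [b k t|b k t|b]; rewrite ?phiI //.
by rewrite -Re_expZ1_Vlayer.
Qed.

Definition layers_params j m : seq (nat * nat) :=
  [seq (j', k) | j' <- iota j m, k <- iota 1 n].

Lemma layers_paramsSS j m : layers_params j m.+2 =
  layer_params n j ++ layer_params n j.+1 ++ layers_params j.+2 m.
Proof. by rewrite /layers_params /= catA. Qed.

Variables (L : nat) (f : params R -> R) (M : R).
Hypothesis f_bound : forall b, 0 <= f b <= M.
Hypothesis f_ge : forall b, complex.Re (expZ1 (state (n := n) b L)) ^+ 2 <= f b.

Lemma expect_layers_ge m i : (i + m = L)%N -> forall b,
  ((2 : R) ^+ m.*2)^-1 * complex.Re (expZ1 (state (n := n) b i)) ^+ 2 <=
  expect R (layers_params i.*2.+1 m.*2.+1) f b.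
Proof.
have n_gt0 : (0 < n)%N by lia.
elim: m i => [|m IH] i iL b.
  rewrite addn0 in iL; subst i; rewrite expr0 invr1 mul1r.
  pose K (beta : params R) := complex.Re (expZ1 (state (n := n) beta L)) ^+ 2.
  apply: (@expect_ge_invariant _ _ f K M) => // [b'|p b' t /allpairsP[[j k] [/= + _ ->]]].
    by rewrite sqr_ge0 f_ge.
  by rewrite inE => /eqP->; rewrite /K state_upd.
have c_ge0 : 0 <= ((2 : R) ^+ m.*2)^-1 by rewrite invr_ge0 exprn_ge0.
rewrite (_ : ((2 : R) ^+ m.+1.*2)^-1 = ((2 : R) ^+ m.*2)^-1 / 2 / 2); last first.
  by rewrite doubleS !exprS !invfM; ring.
rewrite doubleS layers_paramsSS 2!expect_cat.
apply: (@expect_layer_ge _ _ M _ (fun b => state b i)) => // [|b' k t|b'].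
- by do 2!apply: expect_bound.
- by rewrite state_upd.
rewrite -(expZ1_diag_unitary _ _ (CZ2_diag_unitary n2)).
apply: (@expect_layer_ge _ _ M _
  (fun b => vapply (CZ2 R n) (vapply (Vlayer R n b i.*2.+1) (state b i)))) => // [|b'' k t|b''].
- exact: expect_bound.
- by rewrite state_upd ?Vlayer_upd //; lia.
rewrite -(expZ1_diag_unitary _ _ CZ1_diag_unitary) -stateS.
by apply: IH; rewrite -iL addSnnS.
Qed.

End Layers.

Section Alpha.
Context {R : realType} {n : nat}.
Hypothesis n2 : (2 <= n)%N.

Lemma alpha_rho_in_ge L b :
  complex.Re (expZ1 (state (n := n) b L)) ^+ 2 <= alpha R n (rho_in R n L b).
Proof.
have n_gt0 : (0 < n)%N by lia.
rewrite alphaE column_Ucirc Re_expX1_Vlayer // Re_expZ1_Vlayer //.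
have := cos_dbl2Dsin_dbl2 (b L.*2.+1 1%N).
set C := cos_dbl _; set S := sin_dbl _.
set z := complex.Re (expZ1 _); set x := complex.Re (expX1 _) => CS.
rewrite (_ : _ + _ = (C ^+ 2 + S ^+ 2) * (x ^+ 2 + z ^+ 2)); last by ring.
by rewrite CS mul1r lerDr sqr_ge0.
Qed.

(* Any uniform bound would do: it only keeps the iterated averages finite. *)
Lemma alpha_rho_in_bound L b :
  0 <= alpha R n (rho_in R n L b) <= ((#|{: basis n}| ^ 2)%:R) ^+ 2 *+ 2.
Proof.
have unit : sqnorm (column (Ucirc R n L b) bits0) = 1.
  by rewrite column_Ucirc sqnorm_Vlayer sqnorm_state.
rewrite alphaE addr_ge0 ?sqr_ge0 //= mulr2n.
by rewrite lerD // Re_expval_sqr_le // => x y; apply: onq_norm_le1;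
  [exact: sX_norm_le1 | exact: sZ_norm_le1].
Qed.

End Alpha.

Local Close Scope complex_scope.

Theorem theorem3 (R : realType) (n L : nat) :
  (2 <= n)%N -> ~~ odd n -> (1 <= L)%N ->
  (2 : R) ^- L.*2 <=
    expect R (all_params n L) (fun beta => alpha R n (rho_in R n L beta))
           (fun _ _ => 0).
Proof.
move=> n2 _ _.
have := @expect_layers_ge R n n2 L _ _ (alpha_rho_in_bound n2 L) (alpha_rho_in_ge n2 L)
  L 0 (add0n L) (fun _ _ => 0).
by rewrite state0 expZ1_ket_bits1 ?(ltnW n2) //= sqrrN expr1n mulr1.
Qed.
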